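(* Every formula of $\mathcal L^{subj}(\Phi)$ provable in $\mathbf C^{subj}$ is valid in each of the following classes of subjective structures (with the conditional interpreted as described in the context): well-founded preferential structures, preferential structures, $\kappa$-structures, possibility structures, and PPD structures.
   Context: The language $\mathcal{L}^{subj}(\Phi)$ over a first-order vocabulary $\Phi$ is the least set containing the atomic first-order formulas (including equalities) and closed under $\neg,\land,\lor,\Rightarrow$, $\forall x$, $\exists x$, and a binary conditional connective $\hookrightarrow$. $\mathit{true},\mathit{false}$ are a fixed tautology and its negation; $N\phi:=\neg\phi\hookrightarrow\mathit{false}$. Each structure below has the form $(\mathit{Dom},W,X,\pi)$ with $\mathit{Dom}$ a nonempty set, $W$ a set of worlds, $\pi(w)$ an interpretation of $\Phi$ over $\mathit{Dom}$ for each $w\in W$, and $X$ the ''measure'' below. Valuations map variables to $\mathit{Dom}$; atomic formulas, Boolean connectives and quantifiers are evaluated at $(w,v)$ as in first-order logic in $(\mathit{Dom},\pi(w))$ (with $\forall x\phi$ true iff $\phi$ holds for all valuations differing from $v$ at most on $x$), and $[\![\phi]\!]_v=\{w: \phi \text{ holds at }(w,v)\}$. The conditional $\phi\hookrightarrow\psi$ holds at $(w,v)$ as follows: - Possibility structure: $X=\mathrm{Poss}:2^W\to[0,1]$ with $\mathrm{Poss}(W)=1$, $\mathrm{Poss}(\emptyset)=0$, $\mathrm{Poss}(A)=\sup_{w\in A}\mathrm{Poss}(\{w\})$; condition: $\mathrm{Poss}([\![\phi]\!]_v)=0$ or $\mathrm{Poss}([\![\phi\land\psi]\!]_v)>\mathrm{Poss}([\![\phi\land\neg\psi]\!]_v)$.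 - $\kappa$-structure: $X=\kappa:2^W\to\mathbb N\cup\{\infty\}$ with $\kappa(W)=0$, $\kappa(\emptyset)=\infty$, $\kappa(A)=\min_{w\in A}\kappa(\{w\})$; condition: $\kappa([\![\phi]\!]_v)=\infty$ or $\kappa([\![\phi\land\psi]\!]_v)<\kappa([\![\phi\land\neg\psi]\!]_v)$. - Preferential structure: $X=\prec$ a strict partial order on $W$ ($w\prec w'$: $w$ is preferred to $w'$; $w\preceq w'$ means $w\prec w'$ or $w=w'$); condition: for every $w_1\in[\![\phi]\!]_v$ there is $w_2\preceq w_1$ with $w_2\in[\![\phi\land\psi]\!]_v$ such that every $w_3\prec w_2$ lies in $[\![\phi\Rightarrow\psi]\!]_v$. It is well-founded if there is no infinite sequence $\cdots\prec w_2\prec w_1$. - PPD structure: $X=(\Pr_i)_{i\ge1}$ a sequence of probability measures on an algebra of subsets of $W$ containing all sets $[\![\phi]\!]_v$; condition: $\lim_{i\to\infty}\Pr_i([\![\psi]\!]_v\mid[\![\phi]\!]_v)=1$, where the conditional probability is taken to be $1$ when $\Pr_i([\![\phi]\!]_v)=0$. A formula is valid in a class if it holds at every world and valuation of every structure in it. The axiom system $\mathbf C^{subj}$ consists of all generalizations (formulas $\forall x_1\ldots\forall x_n\psi$, $n\ge 0$) of the following axioms, together with the rules below ($x,y$ variables, $t$ a term): C0: all instances of propositional tautologies; C1: $\phi\hookrightarrow\phi$; C2: $((\phi\hookrightarrow\psi_1)\land(\phi\hookrightarrow\psi_2))\Rightarrow(\phi\hookrightarrow(\psi_1\land\psi_2))$;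 C3: $((\phi_1\hookrightarrow\psi)\land(\phi_2\hookrightarrow\psi))\Rightarrow((\phi_1\lor\phi_2)\hookrightarrow\psi)$; C4: $((\phi_1\hookrightarrow\phi_2)\land(\phi_1\hookrightarrow\psi))\Rightarrow((\phi_1\land\phi_2)\hookrightarrow\psi)$; C5: $[(\phi\hookrightarrow\psi)\Rightarrow N(\phi\hookrightarrow\psi)]\land[\neg(\phi\hookrightarrow\psi)\Rightarrow N\neg(\phi\hookrightarrow\psi)]$; F1: $\forall x\phi\Rightarrow\phi[x/t]$ where $t$ is substitutable for $x$ in $\phi$: no variable of $t$ becomes bound after substitution, and if $\phi$ contains $\hookrightarrow$ then $t$ must be a variable; F2: $\forall x(\phi\Rightarrow\psi)\Rightarrow(\forall x\phi\Rightarrow\forall x\psi)$; F3: $\phi\Rightarrow\forall x\phi$ if $x$ is not free in $\phi$; F4: $x=x$; F5: $x=y\Rightarrow(\phi\Rightarrow\phi')$ for $\phi$ quantifier-free and $\hookrightarrow$-free, $\phi'$ obtained by replacing zero or more occurrences of $x$ by $y$; F6: $x=y\Rightarrow N(x=y)$; F7: $x\ne y\Rightarrow N(x\ne y)$. Rules: MP: from $\phi$ and $\phi\Rightarrow\psi$ infer $\psi$; R1: from $\phi_1\Leftrightarrow\phi_2$ infer $(\phi_1\hookrightarrow\psi)\Leftrightarrow(\phi_2\hookrightarrow\psi)$; R2: from $\psi_1\Rightarrow\psi_2$ infer $(\phi\hookrightarrow\psi_1)\Rightarrow(\phi\hookrightarrow\psi_2)$. *)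

From Stdlib Require Import Reals Arith List.
From Stdlib Require Vectors.Fin.
Set Implicit Arguments.

Record vocab := {
  fsym : Type; far : fsym -> nat;
  psym : Type; par : psym -> nat }.

Section Logic.
Variable S : vocab.

Inductive term : Type :=
| Var : nat -> term
| App : forall f : fsym S, (Fin.t (far S f) -> term) -> term.

Inductive form : Type :=
| Atom : forall p : psym S, (Fin.t (par S p) -> term) -> form
| Eq   : term -> term -> form
| Neg  : form -> form
| And  : form -> form -> form
| Or   : form -> form -> form
| Imp  : form -> form -> form
| All  : nat -> form -> form
| Ex   : nat -> form -> form
| Cond : form -> form -> form.

Definition Iff (a b : form) : form := And (Imp a b) (Imp b a).
Definition ftrue : form := Imp (Eq (Var 0) (Var 0)) (Eq (Var 0) (Var 0)).
Definition ffalse : form := Neg ftrue.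
Definition Nec (a : form) : form := Cond (Neg a) ffalse.

Inductive occurs (x : nat) : term -> Prop :=
| occ_var : occurs x (Var x)
| occ_app : forall f a (i : Fin.t (far S f)), occurs x (a i) -> occurs x (App f a).

Fixpoint free (x : nat) (a : form) : Prop :=
  match a with
  | Atom p ts => exists i, occurs x (ts i)
  | Eq t u => occurs x t \/ occurs x u
  | Neg b => free x b
  | And b c | Or b c | Imp b c | Cond b c => free x b \/ free x c
  | All y b | Ex y b => y <> x /\ free x b
  end.

Fixpoint has_cond (a : form) : Prop :=
  match a with
  | Atom _ _ | Eq _ _ => False
  | Neg b => has_cond b
  | And b c | Or b c | Imp b c => has_cond b \/ has_cond c
  | All _ b | Ex _ b => has_cond b
  | Cond _ _ => True
  end.

Fixpoint qf_cf (a : form) : Prop :=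
  match a with
  | Atom _ _ | Eq _ _ => True
  | Neg b => qf_cf b
  | And b c | Or b c | Imp b c => qf_cf b /\ qf_cf c
  | All _ _ | Ex _ _ | Cond _ _ => False
  end.

Fixpoint tsubst (x : nat) (t u : term) : term :=
  match u with
  | Var y => if Nat.eqb y x then t else Var y
  | App f ts => App f (fun i => tsubst x t (ts i))
  end.

Fixpoint fsubst (x : nat) (t : term) (a : form) : form :=
  match a with
  | Atom p ts => Atom p (fun i => tsubst x t (ts i))
  | Eq u1 u2 => Eq (tsubst x t u1) (tsubst x t u2)
  | Neg b => Neg (fsubst x t b)
  | And b c => And (fsubst x t b) (fsubst x t c)
  | Or b c => Or (fsubst x t b) (fsubst x t c)
  | Imp b c => Imp (fsubst x t b) (fsubst x t c)
  | All y b => if Nat.eqb y x then All y b else All y (fsubst x t b)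
  | Ex y b => if Nat.eqb y x then Ex y b else Ex y (fsubst x t b)
  | Cond b c => Cond (fsubst x t b) (fsubst x t c)
  end.

Fixpoint free_for (t : term) (x : nat) (a : form) : Prop :=
  match a with
  | Atom _ _ | Eq _ _ => True
  | Neg b => free_for t x b
  | And b c | Or b c | Imp b c | Cond b c => free_for t x b /\ free_for t x c
  | All y b | Ex y b => ~ free x a \/ (~ occurs y t /\ free_for t x b)
  end.

Definition substitutable (t : term) (x : nat) (a : form) : Prop :=
  free_for t x a /\ (has_cond a -> exists z, t = Var z).

Inductive trepl (x y : nat) : term -> term -> Prop :=
| tr_keep : forall z, trepl x y (Var z) (Var z)
| tr_swap : trepl x y (Var x) (Var y)
| tr_app : forall f a b, (forall i, trepl x y (a i) (b i)) -> trepl x y (App f a) (App f b).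

Inductive frepl (x y : nat) : form -> form -> Prop :=
| fr_atom : forall p a b, (forall i, trepl x y (a i) (b i)) -> frepl x y (Atom p a) (Atom p b)
| fr_eq : forall t1 t2 u1 u2, trepl x y t1 u1 -> trepl x y t2 u2 -> frepl x y (Eq t1 t2) (Eq u1 u2)
| fr_neg : forall a b, frepl x y a b -> frepl x y (Neg a) (Neg b)
| fr_and : forall a1 a2 b1 b2, frepl x y a1 b1 -> frepl x y a2 b2 -> frepl x y (And a1 a2) (And b1 b2)
| fr_or : forall a1 a2 b1 b2, frepl x y a1 b1 -> frepl x y a2 b2 -> frepl x y (Or a1 a2) (Or b1 b2)
| fr_imp : forall a1 a2 b1 b2, frepl x y a1 b1 -> frepl x y a2 b2 -> frepl x y (Imp a1 a2) (Imp b1 b2).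

Inductive pform : Type :=
| PV : nat -> pform
| PNeg : pform -> pform
| PAnd : pform -> pform -> pform
| POr : pform -> pform -> pform
| PImp : pform -> pform -> pform.

Fixpoint peval (v : nat -> bool) (p : pform) : bool :=
  match p with
  | PV n => v n
  | PNeg q => negb (peval v q)
  | PAnd q r => andb (peval v q) (peval v r)
  | POr q r => orb (peval v q) (peval v r)
  | PImp q r => implb (peval v q) (peval v r)
  end.

Definition ptaut (p : pform) : Prop := forall v, peval v p = true.

Fixpoint pinst (s : nat -> form) (p : pform) : form :=
  match p with
  | PV n => s n
  | PNeg q => Neg (pinst s q)
  | PAnd q r => And (pinst s q) (pinst s r)
  | POr q r => Or (pinst s q) (pinst s r)
  | PImp q r => Imp (pinst s q) (pinst s r)
  end.

Inductive axiom : form -> Prop :=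
| ax_C0 : forall p s, ptaut p -> axiom (pinst s p)
| ax_C1 : forall a, axiom (Cond a a)
| ax_C2 : forall a b1 b2,
    axiom (Imp (And (Cond a b1) (Cond a b2)) (Cond a (And b1 b2)))
| ax_C3 : forall a1 a2 b,
    axiom (Imp (And (Cond a1 b) (Cond a2 b)) (Cond (Or a1 a2) b))
| ax_C4 : forall a1 a2 b,
    axiom (Imp (And (Cond a1 a2) (Cond a1 b)) (Cond (And a1 a2) b))
| ax_C5 : forall a b,
    axiom (And (Imp (Cond a b) (Nec (Cond a b)))
               (Imp (Neg (Cond a b)) (Nec (Neg (Cond a b)))))
| ax_F1 : forall x a t, substitutable t x a -> axiom (Imp (All x a) (fsubst x t a))
| ax_F2 : forall x a b, axiom (Imp (All x (Imp a b)) (Imp (All x a) (All x b)))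
| ax_F3 : forall x a, ~ free x a -> axiom (Imp a (All x a))
| ax_F4 : forall x, axiom (Eq (Var x) (Var x))
| ax_F5 : forall x y a a', qf_cf a -> frepl x y a a' ->
    axiom (Imp (Eq (Var x) (Var y)) (Imp a a'))
| ax_F6 : forall x y, axiom (Imp (Eq (Var x) (Var y)) (Nec (Eq (Var x) (Var y))))
| ax_F7 : forall x y,
    axiom (Imp (Neg (Eq (Var x) (Var y))) (Nec (Neg (Eq (Var x) (Var y))))).

Fixpoint gen (xs : list nat) (a : form) : form :=
  match xs with
  | nil => a
  | x :: xs' => All x (gen xs' a)
  end.

Inductive provable : form -> Prop :=
| pr_ax : forall xs a, axiom a -> provable (gen xs a)
| pr_MP : forall a b, provable a -> provable (Imp a b) -> provable b
| pr_R1 : forall a1 a2 b, provable (Iff a1 a2) -> provable (Iff (Cond a1 b) (Cond a2 b))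
| pr_R2 : forall a b1 b2, provable (Imp b1 b2) -> provable (Imp (Cond a b1) (Cond a b2)).

Record interp (D : Type) := {
  ifun : forall f : fsym S, (Fin.t (far S f) -> D) -> D;
  ipred : forall p : psym S, (Fin.t (par S p) -> D) -> Prop }.

Fixpoint teval (D : Type) (I : interp D) (v : nat -> D) (t : term) : D :=
  match t with
  | Var x => v x
  | App f ts => ifun I f (fun i => teval I v (ts i))
  end.

Definition upd (D : Type) (v : nat -> D) (x : nat) (d : D) : nat -> D :=
  fun y => if Nat.eqb y x then d else v y.

(* generic satisfaction; [cnd A B] is the truth condition of phi ↪ psi where
   A = [[phi]]_v and B = [[psi]]_v *)
Fixpoint sat (D W : Type) (pi : W -> interp D)
    (cnd : (W -> Prop) -> (W -> Prop) -> Prop) (a : form) (w : W) (v : nat -> D)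
    {struct a} : Prop :=
  match a with
  | Atom p ts => ipred (pi w) p (fun i => teval (pi w) v (ts i))
  | Eq t u => teval (pi w) v t = teval (pi w) v u
  | Neg b => ~ sat pi cnd b w v
  | And b c => sat pi cnd b w v /\ sat pi cnd c w v
  | Or b c => sat pi cnd b w v \/ sat pi cnd c w v
  | Imp b c => sat pi cnd b w v -> sat pi cnd c w v
  | All x b => forall d, sat pi cnd b w (upd v x d)
  | Ex x b => exists d, sat pi cnd b w (upd v x d)
  | Cond b c => cnd (fun w' => sat pi cnd b w' v) (fun w' => sat pi cnd c w' v)
  end.

End Logic.

Section Measures.
Variable W : Type.
Definition setT : W -> Prop := fun _ => True.
Definition sing (w : W) : W -> Prop := fun w' => w' = w.
Definition isempty (A : W -> Prop) : Prop := forall w, ~ A w.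

Definition is_poss (Poss : (W -> Prop) -> R) : Prop :=
  (forall A, 0 <= Poss A <= 1)%R /\
  Poss setT = 1%R /\
  (forall A, isempty A -> Poss A = 0%R) /\
  (forall A, (exists w, A w) ->
     is_lub (fun r => exists w, A w /\ r = Poss (sing w)) (Poss A)).

Definition poss_cond (Poss : (W -> Prop) -> R) (A B : W -> Prop) : Prop :=
  Poss A = 0%R \/
  (Poss (fun w => A w /\ ~ B w) < Poss (fun w => A w /\ B w))%R.

(** kappa-structures: values in nat ∪ {oo}, with None = oo *)
Definition kle (a b : option nat) : Prop :=
  match a, b with
  | _, None => True
  | None, Some _ => False
  | Some m, Some n => m <= n
  end.
Definition klt (a b : option nat) : Prop :=
  match a, b with
  | None, _ => False
  | Some _, None => True
  | Some m, Some n => m < n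
  end.

Definition is_kappa (k : (W -> Prop) -> option nat) : Prop :=
  k setT = Some 0 /\
  (forall A, isempty A -> k A = None) /\
  (forall A, (exists w, A w) ->
     (exists w, A w /\ k A = k (sing w)) /\ (forall w, A w -> kle (k A) (k (sing w)))).

Definition kappa_cond (k : (W -> Prop) -> option nat) (A B : W -> Prop) : Prop :=
  k A = None \/ klt (k (fun w => A w /\ B w)) (k (fun w => A w /\ ~ B w)).

Definition strict_po (prec : W -> W -> Prop) : Prop :=
  (forall w, ~ prec w w) /\ (forall a b c, prec a b -> prec b c -> prec a c).

Definition well_founded_pref (prec : W -> W -> Prop) : Prop :=
  ~ exists s : nat -> W, forall n, prec (s (S n)) (s n).

Definition pref_cond (prec : W -> W -> Prop) (A B : W -> Prop) : Prop :=
  forall w1, A w1 ->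
    exists w2, (prec w2 w1 \/ w2 = w1) /\ (A w2 /\ B w2) /\
      (forall w3, prec w3 w2 -> (A w3 -> B w3)).

Definition is_algebra (Alg : (W -> Prop) -> Prop) : Prop :=
  Alg setT /\ (forall A, Alg A -> Alg (fun w => ~ A w)) /\
  (forall A B, Alg A -> Alg B -> Alg (fun w => A w \/ B w)).

Definition is_prob_on (Alg : (W -> Prop) -> Prop) (P : (W -> Prop) -> R) : Prop :=
  (forall A, Alg A -> 0 <= P A)%R /\
  P setT = 1%R /\
  (forall A : nat -> W -> Prop, (forall n, Alg (A n)) ->
     (forall m n w, m <> n -> A m w -> A n w -> False) ->
     Alg (fun w => exists n, A n w) ->
     infinite_sum (fun n => P (A n)) (P (fun w => exists n, A n w))).

(* Pr(B | A), taken to be 1 when Pr(A) = 0 *)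
Definition cprob (P : (W -> Prop) -> R) (B A : W -> Prop) : R :=
  if Req_EM_T (P A) 0%R then 1%R else (P (fun w => A w /\ B w) / P A)%R.

Definition ppd_cond (Pr : nat -> (W -> Prop) -> R) (A B : W -> Prop) : Prop :=
  Un_cv (fun i => cprob (Pr i) B A) 1%R.
End Measures.

Section Validity.
Variable S : vocab.

Definition valid_pref (a : form S) : Prop :=
  forall (D W : Type) (pi : W -> interp S D) (prec : W -> W -> Prop),
    inhabited D -> strict_po prec ->
    forall w v, sat pi (pref_cond prec) a w v.

Definition valid_wf_pref (a : form S) : Prop :=
  forall (D W : Type) (pi : W -> interp S D) (prec : W -> W -> Prop),
    inhabited D -> strict_po prec -> well_founded_pref prec ->
    forall w v, sat pi (pref_cond prec) a w v.

Definition valid_kappa (a : form S) : Prop :=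
  forall (D W : Type) (pi : W -> interp S D) (k : (W -> Prop) -> option nat),
    inhabited D -> is_kappa k ->
    forall w v, sat pi (kappa_cond k) a w v.

Definition valid_poss (a : form S) : Prop :=
  forall (D W : Type) (pi : W -> interp S D) (Poss : (W -> Prop) -> R),
    inhabited D -> is_poss Poss ->
    forall w v, sat pi (poss_cond Poss) a w v.

Definition valid_ppd (a : form S) : Prop :=
  forall (D W : Type) (pi : W -> interp S D) (Alg : (W -> Prop) -> Prop)
         (Pr : nat -> (W -> Prop) -> R),
    inhabited D -> is_algebra Alg -> (forall i, is_prob_on Alg (Pr i)) ->
    (forall (b : form S) (v : nat -> D), Alg (fun w => sat pi (ppd_cond Pr) b w v)) ->
    forall w v, sat pi (ppd_cond Pr) a w v.
End Validity.

(* Soundness is proved once for an abstract conditional: every axiom and rule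
   of C^subj is valid as soon as the relation interpreting ↪ satisfies the
   laws of [conditional_laws] on definable sets.  C5 holds because the truth
   condition of ↪ does not depend on the world, and [N b] holds whenever [b]
   holds everywhere, since [~b] then denotes the empty set.

   For preferential structures
   they follow by chasing worlds down the order.  A possibility measure is max-additive, and for a max-additive
   rank [A ↪ B] just says Poss(A /\ ~B) < Poss(A) unless Poss(A) = 0, from
   which the laws are immediate; κ-rankings reduce to this case through
   n ↦ 1/(n+1).  For PPD structures [A ↪ B] says that the error probabilities
   Pr_i(~B | A) tend to 0; they are subadditive for C2 and C3, antitone for R2,
   and at most double under C4 once Pr_i(B | A) >= 1/2. *)

From Stdlib Require Import Reals Lra Lia Classical ClassicalEpsilon
  FunctionalExtensionality PropExtensionality.

Set Implicit Arguments.

Lemma pred_ext {W : Type} {A B : W -> Prop} : (forall w, A w <-> B w) -> A = B.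
Proof.
  intros H; apply functional_extensionality; intros w.
  apply propositional_extensionality, H.
Qed.

Section Substitution.
Variables (S : vocab) (D W : Type) (pi : W -> interp S D)
  (cnd : (W -> Prop) -> (W -> Prop) -> Prop).

Notation sat := (sat pi cnd).

Lemma upd_neq (v : nat -> D) x y d : x <> y -> upd v y d x = v x.
Proof. intros H; unfold upd; destruct (Nat.eqb_spec x y); congruence. Qed.

Lemma upd_upd_eq (v : nat -> D) x e d : upd (upd v x e) x d = upd v x d.
Proof. apply functional_extensionality; intros y; unfold upd; now destruct Nat.eqb. Qed.

Lemma upd_upd_comm (v : nat -> D) x y d e :
  x <> y -> upd (upd v x d) y e = upd (upd v y e) x d.
Proof.
  intros Hxy; apply functional_extensionality; intros z; unfold upd.
  destruct (Nat.eqb_spec z y), (Nat.eqb_spec z x); congruence.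
Qed.

Lemma teval_agree (I : interp S D) (t : term S) (v v' : nat -> D) :
  (forall x, occurs x t -> v x = v' x) -> teval I v t = teval I v' t.
Proof.
  revert v v'; induction t as [x | f ts IH]; intros v v' H; simpl.
  - apply H; constructor.
  - f_equal; apply functional_extensionality; intros i.
    apply IH; intros x Hx; apply H; econstructor; eauto.
Qed.

Lemma teval_tsubst (I : interp S D) x t (u : term S) v :
  teval I v (tsubst x t u) = teval I (upd v x (teval I v t)) u.
Proof.
  induction u as [y | f ts IH]; simpl.
  - unfold upd; now destruct Nat.eqb.
  - f_equal; apply functional_extensionality; intros i; apply IH.
Qed.

Lemma tsubst_id x t (u : term S) : ~ occurs x u -> tsubst x t u = u.
Proof.
  induction u as [y | f ts IH]; intros H; simpl.
  - destruct (Nat.eqb_spec y x) as [->|]; [exfalso; apply H; constructor | easy].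
  - f_equal; apply functional_extensionality; intros i.
    apply IH; intros Hi; apply H; econstructor; eauto.
Qed.

(* [cnd] is an arbitrary relation on sets: equivalent bodies must first be
   turned into equal sets by extensionality. *)
Ltac cond_congr IH1 IH2 :=
  match goal with
  | |- cnd ?A1 ?B1 <-> cnd ?A2 ?B2 =>
      let E1 := fresh in let E2 := fresh in
      assert (E1 : A1 = A2) by (apply pred_ext; intros; apply IH1; auto);
      assert (E2 : B1 = B2) by (apply pred_ext; intros; apply IH2; auto);
      rewrite E1, E2; reflexivity
  end.

Lemma sat_agree (a : form S) v v' :
  (forall x, free x a -> v x = v' x) -> forall w, sat a w v <-> sat a w v'.
Proof.
  revert v v'; induction a as [p ts | t u | a IH | a1 IH1 a2 IH2 | a1 IH1 a2 IH2
    | a1 IH1 a2 IH2 | y a IH | y a IH | a1 IH1 a2 IH2]; intros v v' H w; simpl in *.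
  - replace (fun i => teval (pi w) v (ts i)) with (fun i => teval (pi w) v' (ts i));
      [easy|].
    apply functional_extensionality; intros i; symmetry; apply teval_agree; eauto.
  - rewrite (teval_agree (t := t) _ v v'), (teval_agree (t := u) _ v v'); auto; easy.
  - now rewrite (IH v v').
  - rewrite (IH1 v v'), (IH2 v v'); auto; easy.
  - rewrite (IH1 v v'), (IH2 v v'); auto; easy.
  - rewrite (IH1 v v'), (IH2 v v'); auto; easy.
  - assert (Hd : forall d, sat a w (upd v y d) <-> sat a w (upd v' y d)).
    { intros d; apply IH; intros x Hx; unfold upd.
      destruct (Nat.eqb_spec x y); auto. }
    now setoid_rewrite Hd.
  - assert (Hd : forall d, sat a w (upd v y d) <-> sat a w (upd v' y d)).
    { intros d; apply IH; intros x Hx; unfold upd.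
      destruct (Nat.eqb_spec x y); auto. }
    now setoid_rewrite Hd.
  - cond_congr (IH1 v v') (IH2 v v').
Qed.

Lemma sat_fsubst_notfree x t (a : form S) :
  ~ free x a -> forall v w, sat (fsubst x t a) w v <-> sat a w v.
Proof.
  induction a as [p ts | u1 u2 | a IH | a1 IH1 a2 IH2 | a1 IH1 a2 IH2
    | a1 IH1 a2 IH2 | y a IH | y a IH | a1 IH1 a2 IH2]; intros Hx v w; simpl in *.
  - replace (fun i => teval (pi w) v (tsubst x t (ts i)))
      with (fun i => teval (pi w) v (ts i)); [easy|].
    apply functional_extensionality; intros i; rewrite tsubst_id; eauto.
  - rewrite !tsubst_id; auto; easy.
  - now rewrite IH.
  - rewrite IH1, IH2; auto; easy.
  - rewrite IH1, IH2; auto; easy.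
  - rewrite IH1, IH2; auto; easy.
  - destruct (Nat.eqb_spec y x); [easy|]; simpl.
    now setoid_rewrite IH; [| auto..].
  - destruct (Nat.eqb_spec y x); [easy|]; simpl.
    now setoid_rewrite IH; [| auto..].
  - cond_congr (IH1 ltac:(tauto) v) (IH2 ltac:(tauto) v).
Qed.

Lemma sat_fsubst_binder x y t (a : form S) w v d : y <> x ->
  ~ free x a \/ ~ occurs y t /\
    (forall v, sat (fsubst x t a) w v <-> sat a w (upd v x (teval (pi w) v t))) ->
  sat (fsubst x t a) w (upd v y d) <-> sat a w (upd (upd v x (teval (pi w) v t)) y d).
Proof.
  intros Hyx [Hnf | [Hy IH]].
  - rewrite sat_fsubst_notfree by auto.
    apply sat_agree; intros z Hz; unfold upd.
    destruct (Nat.eqb_spec z y), (Nat.eqb_spec z x); subst; tauto || congruence.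
  - rewrite IH, upd_upd_comm by auto.
    rewrite (teval_agree (t := t) _ (upd v y d) v); [easy|].
    intros z Hz; apply upd_neq; congruence.
Qed.

Lemma sat_fsubst x t (a : form S) : substitutable t x a ->
  forall v w, sat (fsubst x t a) w v <-> sat a w (upd v x (teval (pi w) v t)).
Proof.
  intros [Hff Hcond].
  induction a as [p ts | u1 u2 | a IH | a1 IH1 a2 IH2 | a1 IH1 a2 IH2
    | a1 IH1 a2 IH2 | y a IH | y a IH | a1 IH1 a2 IH2]; intros v w; simpl in *.
  - replace (fun i => teval (pi w) v (tsubst x t (ts i)))
      with (fun i => teval (pi w) (upd v x (teval (pi w) v t)) (ts i)); [easy|].
    apply functional_extensionality; intros i; now rewrite teval_tsubst.
  - now rewrite !teval_tsubst.
  - now rewrite IH.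
  - destruct Hff; rewrite IH1, IH2; tauto.
  - destruct Hff; rewrite IH1, IH2; tauto.
  - destruct Hff; rewrite IH1, IH2; tauto.
  - destruct (Nat.eqb_spec y x) as [<- | Hyx]; simpl.
    + now setoid_rewrite upd_upd_eq.
    + setoid_rewrite sat_fsubst_binder; [easy | auto | intuition].
  - destruct (Nat.eqb_spec y x) as [<- | Hyx]; simpl.
    + now setoid_rewrite upd_upd_eq.
    + setoid_rewrite sat_fsubst_binder; [easy | auto | intuition].
  - destruct (Hcond I) as [z ->], Hff; simpl in *.
    cond_congr (IH1 ltac:(auto) ltac:(auto) v) (IH2 ltac:(auto) ltac:(auto) v).
Qed.

Lemma teval_trepl (I : interp S D) v x y t t' :
  v x = v y -> trepl x y t t' -> teval I v t = teval I v t'.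
Proof.
  intros Hxy H; induction H; simpl; auto.
  f_equal; now apply functional_extensionality.
Qed.

Lemma sat_frepl v w x y a a' :
  v x = v y -> frepl x y a a' -> sat a w v <-> sat a' w v.
Proof.
  intros Hxy H; induction H as [p ts ts' Hts | t1 t2 u1 u2 H1 H2 | | | | ]; simpl;
    try tauto.
  - replace (fun i => teval (pi w) v (ts' i)) with (fun i => teval (pi w) v (ts i));
      [easy|].
    apply functional_extensionality; intros i; eapply teval_trepl; eauto.
  - now rewrite (teval_trepl _ _ Hxy H1), (teval_trepl _ _ Hxy H2).
Qed.

Lemma sat_pinst s w v (p : pform) :
  sat (pinst s p) w v <->
  peval (fun n => if excluded_middle_informative (sat (s n) w v) then true else false) p
  = true.
Proof.
  induction p as [n | p IH | p1 IH1 p2 IH2 | p1 IH1 p2 IH2 | p1 IH1 p2 IH2]; simpl.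
  - destruct excluded_middle_informative; intuition congruence.
  - rewrite IH; destruct peval; simpl; split; congruence || tauto.
  - rewrite IH1, IH2; destruct (peval _ p1), (peval _ p2); intuition congruence.
  - rewrite IH1, IH2; destruct (peval _ p1), (peval _ p2); intuition congruence.
  - rewrite IH1, IH2; destruct (peval _ p1), (peval _ p2); intuition congruence.
Qed.
End Substitution.

(* [Good] is a class of sets containing the definable ones (the algebra, for
   PPD structures); [cond_vacuous] is what validates [N b] for valid [b]. *)
Record conditional_laws {W : Type} (Good : (W -> Prop) -> Prop)
    (cnd : (W -> Prop) -> (W -> Prop) -> Prop) : Prop := {
  cond_vacuous : forall A B, Good A -> Good B -> isempty A -> cnd A B;
  cond_refl : forall A, Good A -> cnd A A;
  cond_and : forall A B1 B2, Good A -> Good B1 -> Good B2 ->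
    cnd A B1 -> cnd A B2 -> cnd A (fun w => B1 w /\ B2 w);
  cond_or : forall A1 A2 B, Good A1 -> Good A2 -> Good B ->
    cnd A1 B -> cnd A2 B -> cnd (fun w => A1 w \/ A2 w) B;
  cond_cautious_mono : forall A B C, Good A -> Good B -> Good C ->
    cnd A B -> cnd A C -> cnd (fun w => A w /\ B w) C;
  cond_weaken : forall A B1 B2, Good A -> Good B1 -> Good B2 ->
    (forall w, B1 w -> B2 w) -> cnd A B1 -> cnd A B2 }.

Section Soundness.
Variables (S : vocab) (D W : Type) (pi : W -> interp S D)
  (cnd : (W -> Prop) -> (W -> Prop) -> Prop) (Good : (W -> Prop) -> Prop).
Hypothesis definable_good : forall (b : form S) v, Good (fun w => sat pi cnd b w v).
Hypothesis laws : conditional_laws Good cnd.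

Notation sat := (sat pi cnd).

Lemma sat_Nec (b : form S) w v : (forall w', sat b w' v) -> sat (Nec b) w v.
Proof.
  intros H; apply (cond_vacuous laws);
    [apply (definable_good (Neg b)) | apply (definable_good (ffalse S)) |].
  intros w' Hw'; exact (Hw' (H w')).
Qed.

Lemma axiom_sound (a : form S) : axiom a -> forall w v, sat a w v.
Proof.
  destruct 1 as [p s Hp | | | | | | x a t Ht | | x a Hx | | x y a a' _ Ha | |];
    intros w v.
  - apply (sat_pinst pi cnd s w v p), Hp.
  - apply (cond_refl laws), definable_good.
  - intros []; apply (cond_and laws); auto.
  - intros []; apply (cond_or laws); auto.
  - intros []; apply (cond_cautious_mono laws); auto.
  - split; intros H; apply sat_Nec; auto.
  - intros Hall; apply (sat_fsubst pi cnd Ht), Hall.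
  - simpl; auto.
  - intros Ha d; revert Ha; apply sat_agree.
    intros y Hy; apply upd_neq; congruence.
  - reflexivity.
  - intros Hxy; simpl; apply (sat_frepl pi cnd v w Hxy Ha).
  - intros Hxy; apply sat_Nec; auto.
  - intros Hxy; apply sat_Nec; auto.
Qed.

Lemma provable_sound (a : form S) : provable a -> forall w v, sat a w v.
Proof.
  induction 1 as [xs a Ha | a b _ IHa _ IHab | a1 a2 b _ IH | a b1 b2 _ IH];
    intros w v; simpl in *.
  - revert w v; induction xs; simpl; auto using axiom_sound.
  - apply IHab, IHa.
  - replace (fun w' => sat a1 w' v) with (fun w' => sat a2 w' v); [tauto|].
    apply pred_ext; intros w'; specialize (IH w' v); tauto.
  - apply (cond_weaken laws); auto.
Qed.
End Soundness.

Section Preferential.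
Variables (W : Type) (prec : W -> W -> Prop).
Hypothesis prec_spo : strict_po prec.

Let preceq w w' := prec w w' \/ w = w'.

Lemma prec_trans a b c : prec a b -> prec b c -> prec a c.
Proof. apply prec_spo. Qed.

Lemma prec_preceq_trans a b c : prec a b -> preceq b c -> prec a c.
Proof. intros H [H' | <-]; eauto using prec_trans. Qed.

Lemma preceq_trans a b c : preceq a b -> preceq b c -> preceq a c.
Proof. intros [H | <-] Hbc; [left; eapply prec_preceq_trans |]; eauto. Qed.

Lemma pref_and A B1 B2 : pref_cond prec A B1 -> pref_cond prec A B2 ->
  pref_cond prec A (fun w => B1 w /\ B2 w).
Proof.
  intros H1 H2 w1 Hw1.
  destruct (H1 w1 Hw1) as (w2 & L12 & [HA2 HB2] & Below2).
  destruct (H2 w2 HA2) as (w3 & L23 & [HA3 HB3] & Below3).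
  assert (Below : forall w, prec w w3 -> prec w w2) by eauto using prec_preceq_trans.
  exists w3; split; [eapply preceq_trans; eauto |]; split.
  - destruct L23 as [L23 | ->]; auto.
  - auto.
Qed.

(* Take the A1-witness [w2] below [w1]; if some A2-world below [w2] violates
   [B], the A2-witness below that world serves for both antecedents. *)
Lemma pref_or_from_left A1 A2 B : pref_cond prec A1 B -> pref_cond prec A2 B ->
  forall w1, A1 w1 -> exists w2, preceq w2 w1 /\ ((A1 w2 \/ A2 w2) /\ B w2) /\
    (forall w3, prec w3 w2 -> A1 w3 \/ A2 w3 -> B w3).
Proof.
  intros H1 H2 w1 Hw1.
  destruct (H1 w1 Hw1) as (w2 & L12 & [HA2 HB2] & Below2).
  destruct (classic (exists w3, prec w3 w2 /\ A2 w3 /\ ~ B w3))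
    as [(w3 & L23 & HA3 & HB3) | Hnone].
  - destruct (H2 w3 HA3) as (w4 & L34 & [HA4 HB4] & Below4).
    assert (L42 : prec w4 w2) by (destruct L34 as [? | ->]; eauto using prec_trans).
    exists w4; split; [left; eapply prec_preceq_trans; eauto |]; split; [tauto |].
    intros w5 L5 [HA5 | HA5]; eauto using prec_trans.
  - exists w2; split; [exact L12 |]; split; [tauto |].
    intros w5 L5 [HA5 | HA5]; auto.
    apply NNPP; intros HB5; apply Hnone; eauto.
Qed.

Lemma pref_or A1 A2 B : pref_cond prec A1 B -> pref_cond prec A2 B ->
  pref_cond prec (fun w => A1 w \/ A2 w) B.
Proof.
  intros H1 H2 w1 [Hw1 | Hw1].
  - now apply pref_or_from_left.
  - destruct (pref_or_from_left H2 H1 w1 Hw1) as (w2 & L & [HA HB] & Below).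
    exists w2; split; [exact L |]; split; [tauto |].
    intros w3 L3 HA3; apply Below; tauto.
Qed.

Lemma pref_cautious_mono A B C : pref_cond prec A B -> pref_cond prec A C ->
  pref_cond prec (fun w => A w /\ B w) C.
Proof.
  intros HB HC w1 [HA1 _].
  destruct (HC w1 HA1) as (w2 & L12 & [HA2 HC2] & Below2).
  destruct (HB w2 HA2) as (w3 & L23 & [HA3 HB3] & _).
  assert (Below : forall w, prec w w3 -> prec w w2) by eauto using prec_preceq_trans.
  exists w3; split; [eapply preceq_trans; eauto |]; split.
  - destruct L23 as [L23 | ->]; auto.
  - intros w Lw [HA _]; auto.
Qed.

Lemma pref_cond_laws : conditional_laws (fun _ => True) (pref_cond prec).
Proof.
  split.
  - intros A B _ _ Hempty w Hw; now destruct (Hempty w).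
  - intros A _ w Hw; exists w; auto.
  - intros * _ _ _; apply pref_and.
  - intros * _ _ _; apply pref_or.
  - intros * _ _ _; apply pref_cautious_mono.
  - intros A B1 B2 _ _ _ Hsub H w1 Hw1.
    destruct (H w1 Hw1) as (w2 & L & [HA HB] & Below); exists w2; auto.
Qed.
End Preferential.

Section MaxRank.
Variables (W : Type) (r : (W -> Prop) -> R).
Hypothesis rank_nonneg : forall A, (0 <= r A)%R.
Hypothesis rank_empty : forall A, isempty A -> r A = 0%R.
Hypothesis rank_or : forall A B, r (fun w => A w \/ B w) = Rmax (r A) (r B).

Lemma rank_ext {A B} : (forall w, A w <-> B w) -> r A = r B.
Proof. intros H; now rewrite (pred_ext H). Qed.

Lemma rank_union A B C : (forall w, C w <-> A w \/ B w) -> r C = Rmax (r A) (r B).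
Proof. intros H; rewrite (rank_ext H); apply rank_or. Qed.

Lemma rank_mono A B : (forall w, A w -> B w) -> (r A <= r B)%R.
Proof.
  intros H; rewrite (@rank_union A B B); [apply Rmax_l |].
  intros w; split; [auto | intros [? | ?]; auto].
Qed.

Lemma rank_split A B : r A = Rmax (r (fun w => A w /\ B w)) (r (fun w => A w /\ ~ B w)).
Proof. apply rank_union; intros w; destruct (classic (B w)); tauto. Qed.

Lemma poss_cond_rank A B :
  poss_cond r A B <-> r A = 0%R \/ (r (fun w => A w /\ ~ B w) < r A)%R.
Proof.
  unfold poss_cond; rewrite (rank_split A B).
  set (x := r (fun w => A w /\ B w)); set (y := r (fun w => A w /\ ~ B w)).
  unfold Rmax; destruct (Rle_dec x y); intuition lra.
Qed.

Lemma rank_cond_laws : conditional_laws (fun _ => True) (poss_cond r).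
Proof.
  split; setoid_rewrite poss_cond_rank.
  - intros A B _ _ HA; left; auto.
  - intros A _.
    rewrite (@rank_empty (fun w => A w /\ ~ A w)) by firstorder.
    destruct (rank_nonneg A) as [? | ?]; auto.
  - intros A B1 B2 _ _ _ H1 H2.
    assert (E : r (fun w => A w /\ ~ (B1 w /\ B2 w))
              = Rmax (r (fun w => A w /\ ~ B1 w)) (r (fun w => A w /\ ~ B2 w)))
      by (apply rank_union; intros w; destruct (classic (B1 w)); tauto).
    rewrite E; destruct H1, H2; auto; right; now apply Rmax_lub_lt.
  - intros A1 A2 B _ _ _ H1 H2.
    assert (E : r (fun w => (A1 w \/ A2 w) /\ ~ B w)
              = Rmax (r (fun w => A1 w /\ ~ B w)) (r (fun w => A2 w /\ ~ B w)))
      by (apply rank_union; tauto).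
    rewrite rank_or, E.
    assert (r (fun w => A1 w /\ ~ B w) <= r A1)%R by (apply rank_mono; tauto).
    assert (r (fun w => A2 w /\ ~ B w) <= r A2)%R by (apply rank_mono; tauto).
    pose proof (Rmax_l (r A1) (r A2)); pose proof (Rmax_r (r A1) (r A2)).
    pose proof (rank_nonneg A1); pose proof (rank_nonneg A2).
    destruct (Req_dec (Rmax (r A1) (r A2)) 0); [now left | right].
    apply Rmax_lub_lt; destruct H1, H2; lra.
  - intros A B C _ _ _ HB HC.
    assert (HAB : r (fun w => A w /\ B w) = r A).
    { pose proof (rank_split A B) as E; pose proof (rank_nonneg (fun w => A w /\ B w)).
      unfold Rmax in E; destruct Rle_dec, HB; lra. }
    assert (r (fun w => (A w /\ B w) /\ ~ C w) <= r (fun w => A w /\ ~ C w))%R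
      by (apply rank_mono; tauto).
    rewrite HAB; destruct HC; [left | right]; lra.
  - intros A B1 B2 _ _ _ Hsub H.
    assert (r (fun w => A w /\ ~ B2 w) <= r (fun w => A w /\ ~ B1 w))%R
      by (apply rank_mono; firstorder).
    destruct H; [left | right]; lra.
Qed.
End MaxRank.

Section LubRank.
Variables (W : Type) (r : (W -> Prop) -> R).
Hypothesis rank_nonneg : forall A, (0 <= r A)%R.
Hypothesis rank_empty : forall A, isempty A -> r A = 0%R.
Hypothesis rank_lub : forall A, (exists w, A w) ->
  is_lub (fun x => exists w, A w /\ x = r (sing w)) (r A).

Lemma rank_sing_le A w : A w -> (r (sing w) <= r A)%R.
Proof. intros Hw; apply (rank_lub A (ex_intro _ w Hw)); eauto. Qed.

Lemma rank_le_ub A u : (forall w, A w -> (r (sing w) <= u)%R) -> (0 <= u)%R ->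
  (r A <= u)%R.
Proof.
  intros Hu Hu0; destruct (classic (exists w, A w)) as [HA | HA].
  - apply (rank_lub A HA); intros x (w & Hw & ->); auto.
  - rewrite rank_empty; firstorder.
Qed.

Lemma lub_rank_or A B : r (fun w => A w \/ B w) = Rmax (r A) (r B).
Proof.
  apply Rle_antisym.
  - apply rank_le_ub.
    + intros w [Hw | Hw]; eapply Rle_trans; [apply rank_sing_le, Hw | apply Rmax_l
        | apply rank_sing_le, Hw | apply Rmax_r].
    + eapply Rle_trans; [apply rank_nonneg | apply Rmax_l].
  - apply Rmax_lub; apply rank_le_ub; auto using rank_sing_le.
Qed.
End LubRank.

(* κ-ranks are turned into possibility-like ranks by the order-reversing
   embedding n ↦ 1/(n+1), ∞ ↦ 0. *)
Definition kappa_rank (o : option nat) : R :=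
  match o with None => 0%R | Some n => (/ (INR n + 1))%R end.

Lemma kappa_rank_pos n : (0 < kappa_rank (Some n))%R.
Proof. apply Rinv_0_lt_compat; pose proof (pos_INR n); lra. Qed.

Lemma kappa_rank_nonneg o : (0 <= kappa_rank o)%R.
Proof. destruct o; [apply Rlt_le, kappa_rank_pos | simpl; lra]. Qed.

Lemma kappa_rank_eq0 o : kappa_rank o = 0%R <-> o = None.
Proof.
  destruct o as [n |]; [| easy].
  pose proof (kappa_rank_pos n); split; [lra | discriminate].
Qed.

Lemma kappa_rank_le m n : (m <= n)%nat -> (kappa_rank (Some n) <= kappa_rank (Some m))%R.
Proof.
  intros H; apply Rinv_le_contravar; [pose proof (pos_INR m); lra |].
  apply le_INR in H; lra.
Qed.

Lemma kappa_rank_kle a b : kle a b -> (kappa_rank b <= kappa_rank a)%R.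
Proof.
  destruct a as [m |], b as [n |]; intros H; simpl in H; try contradiction.
  - now apply kappa_rank_le.
  - apply Rlt_le, kappa_rank_pos.
  - simpl; lra.
Qed.

Lemma kappa_rank_klt a b : klt a b <-> (kappa_rank b < kappa_rank a)%R.
Proof.
  destruct a as [m |], b as [n |]; simpl.
  - split; intros H.
    + apply Rinv_lt_contravar; [pose proof (pos_INR m); pose proof (pos_INR n); nra |].
      apply lt_INR in H; lra.
    + destruct (Nat.lt_ge_cases m n) as [? | Hnm]; auto.
      apply kappa_rank_le in Hnm; simpl in Hnm; lra.
  - split; [intros _; apply kappa_rank_pos | easy].
  - pose proof (kappa_rank_pos n); simpl in *; split; [easy | lra].
  - split; [easy | lra].
Qed.

Lemma kappa_cond_rank (W : Type) (k : (W -> Prop) -> option nat) :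
  kappa_cond k = poss_cond (fun A => kappa_rank (k A)).
Proof.
  apply functional_extensionality; intros A; apply functional_extensionality; intros B.
  apply propositional_extensionality; unfold kappa_cond, poss_cond.
  rewrite kappa_rank_eq0, kappa_rank_klt; tauto.
Qed.

Lemma kappa_rank_lub (W : Type) (k : (W -> Prop) -> option nat) : is_kappa k ->
  forall A, (exists w, A w) ->
  is_lub (fun x => exists w, A w /\ x = kappa_rank (k (sing w))) (kappa_rank (k A)).
Proof.
  intros (_ & _ & Hmin) A HA; destruct (Hmin A HA) as [(w0 & Hw0 & E) Hle]; split.
  - intros x (w & Hw & ->); apply kappa_rank_kle, Hle, Hw.
  - intros u Hu; rewrite E; apply Hu; eauto.
Qed.

Lemma infinite_sum_const_eq0 c : infinite_sum (fun _ => c) c -> c = 0%R.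
Proof.
  intros H; destruct (Req_dec c 0) as [? | Hc]; [easy | exfalso].
  destruct (H (Rabs c)) as [N HN]; [now apply Rabs_pos_lt |].
  specialize (HN (S N) (Nat.le_succ_diag_r N)); unfold R_dist in HN.
  rewrite sum_cte in HN.
  replace (c * INR (S (S N)) - c)%R with (c * INR (S N))%R in HN
    by (rewrite (S_INR (S N)); ring).
  rewrite Rabs_mult, (Rabs_right (INR (S N))), S_INR in HN
    by (apply Rle_ge, pos_INR).
  pose proof (pos_INR N); pose proof (Rabs_pos_lt c Hc); nra.
Qed.

Section Probability.
Variables (W : Type) (Alg : (W -> Prop) -> Prop) (P : (W -> Prop) -> R).
Hypothesis alg : is_algebra Alg.
Hypothesis prob : is_prob_on Alg P.

Lemma alg_ext {A B} : Alg A -> (forall w, A w <-> B w) -> Alg B.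
Proof. intros H E; now rewrite <- (pred_ext E). Qed.

Lemma alg_compl A : Alg A -> Alg (fun w => ~ A w).
Proof. apply alg. Qed.

Lemma alg_union A B : Alg A -> Alg B -> Alg (fun w => A w \/ B w).
Proof. apply alg. Qed.

Lemma alg_inter A B : Alg A -> Alg B -> Alg (fun w => A w /\ B w).
Proof.
  intros HA HB; apply (alg_ext (A := fun w => ~ (~ A w \/ ~ B w))).
  - auto using alg_compl, alg_union.
  - intros w; destruct (classic (A w)), (classic (B w)); tauto.
Qed.

Lemma alg_diff A B : Alg A -> Alg B -> Alg (fun w => A w /\ ~ B w).
Proof. auto using alg_inter, alg_compl. Qed.

Lemma alg_empty : Alg (fun _ => False).
Proof.
  apply (alg_ext (A := fun w => ~ setT w)); [apply alg_compl, alg |].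
  unfold setT; tauto.
Qed.

Lemma P_ext {A B} : (forall w, A w <-> B w) -> P A = P B.
Proof. intros E; now rewrite (pred_ext E). Qed.

Lemma P_nonneg A : Alg A -> (0 <= P A)%R.
Proof. apply prob. Qed.

(* Countable additivity applied to the constant sequence of empty sets. *)
Lemma P_empty A : isempty A -> P A = 0%R.
Proof.
  intros HA; rewrite (@P_ext A (fun _ => False)) by firstorder.
  apply infinite_sum_const_eq0.
  destruct prob as (_ & _ & Hsum).
  pose proof (Hsum (fun _ _ => False) (fun _ => alg_empty) (fun _ _ _ _ h _ => h)
    (alg_ext alg_empty (B := fun w => exists _ : nat, False) ltac:(firstorder))) as Hs.
  cbv beta in Hs; now rewrite (@P_ext (fun w => exists _ : nat, False) (fun _ => False)) in Hs
    by firstorder.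
Qed.

(* Countable additivity applied to the sequence A, B, ∅, ∅, ... *)
Lemma P_add A B : Alg A -> Alg B -> (forall w, A w -> B w -> False) ->
  P (fun w => A w \/ B w) = (P A + P B)%R.
Proof.
  intros HA HB Hdisj.
  set (F := fun n : nat => match n with 0 => A | 1 => B | _ => fun _ : W => False end).
  assert (HF : forall n, Alg (F n)) by (intros [| [| n]]; simpl; auto using alg_empty).
  assert (Hpair : forall m n w, m <> n -> F m w -> F n w -> False)
    by (intros [| [| m]] [| [| n]] w Hmn; simpl; firstorder).
  assert (EU : forall w, (exists n, F n w) <-> A w \/ B w).
  { intros w; split; [intros [[| [| n]] Hn]; simpl in Hn; tauto |].
    intros [Hw | Hw]; [exists 0%nat | exists 1%nat]; auto. }
  destruct prob as (_ & _ & Hsum).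
  specialize (Hsum F HF Hpair (alg_ext (alg_union HA HB) (fun w => iff_sym (EU w)))).
  rewrite (P_ext EU) in Hsum.
  apply (UL_sequence _ _ _ Hsum).
  assert (Hpart : forall m, sum_f_R0 (fun n => P (F n)) (S m) = (P A + P B)%R).
  { induction m as [| m IH]; simpl in *; [easy |].
    rewrite IH, (P_empty (A := fun _ => False)); [ring | firstorder]. }
  intros eps Heps; exists 1%nat; intros [| n] Hn; [lia |].
  unfold R_dist; rewrite Hpart, Rminus_diag, Rabs_R0; auto.
Qed.

Lemma P_split A B : Alg A -> Alg B ->
  P A = (P (fun w => A w /\ B w) + P (fun w => A w /\ ~ B w))%R.
Proof.
  intros HA HB; rewrite <- P_add by (auto using alg_inter, alg_diff; firstorder).
  apply P_ext; intros w; destruct (classic (B w)); tauto.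
Qed.

Lemma P_mono A B : Alg A -> Alg B -> (forall w, A w -> B w) -> (P A <= P B)%R.
Proof.
  intros HA HB Hsub; rewrite (P_split HB HA), (@P_ext (fun w => B w /\ A w) A) by firstorder.
  pose proof (P_nonneg (alg_diff HB HA)); lra.
Qed.

Lemma P_subadd A B : Alg A -> Alg B -> (P (fun w => A w \/ B w) <= P A + P B)%R.
Proof.
  intros HA HB.
  rewrite (@P_ext _ (fun w => A w \/ (B w /\ ~ A w))), P_add
    by (auto using alg_diff; intros w; destruct (classic (A w)); tauto).
  pose proof (@P_mono (fun w => B w /\ ~ A w) B (alg_diff HB HA) HB (fun w h => proj1 h)).
  lra.
Qed.

(* The error probability Pr(~B | A) = 1 - Pr(B | A), with the same convention
   for null antecedents as [cprob]. *)
Definition err (A B : W -> Prop) : R :=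
  if Req_EM_T (P A) 0 then 0%R else (P (fun w => A w /\ ~ B w) / P A)%R.

Lemma err_zero A B : P A = 0%R -> err A B = 0%R.
Proof. intros H; unfold err; now destruct Req_EM_T. Qed.

Lemma cprob_err A B : Alg A -> Alg B -> cprob P B A = (1 - err A B)%R.
Proof.
  intros HA HB; unfold cprob, err; destruct Req_EM_T as [| Hnz]; [ring |].
  rewrite (P_split HA HB) in Hnz |- *; field; auto.
Qed.

Lemma err_mul A B : Alg A -> Alg B -> P (fun w => A w /\ ~ B w) = (err A B * P A)%R.
Proof.
  intros HA HB; unfold err; destruct Req_EM_T as [HA0 | Hnz]; [| field; auto].
  pose proof (@P_mono (fun w => A w /\ ~ B w) A (alg_diff HA HB) HA (fun w h => proj1 h)).
  pose proof (P_nonneg (alg_diff HA HB)); lra.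
Qed.

Lemma err_nonneg A B : Alg A -> Alg B -> (0 <= err A B)%R.
Proof.
  intros HA HB; destruct (Req_EM_T (P A) 0) as [HA0 | Hnz]; [rewrite err_zero; lra |].
  pose proof (P_nonneg HA); pose proof (P_nonneg (alg_diff HA HB)).
  rewrite err_mul in * by auto.
  apply Rmult_le_reg_r with (P A); lra.
Qed.

Lemma err_le A B c : Alg A -> Alg B -> P A <> 0%R ->
  (P (fun w => A w /\ ~ B w) <= c * P A)%R -> (err A B <= c)%R.
Proof.
  intros HA HB Hnz H; pose proof (P_nonneg HA).
  rewrite err_mul in H by auto; apply Rmult_le_reg_r with (P A); lra.
Qed.

Lemma err_mul_le A B X : Alg A -> Alg B -> Alg X -> (forall w, A w -> X w) ->
  (P (fun w => A w /\ ~ B w) <= err A B * P X)%R.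
Proof.
  intros HA HB HX Hsub; rewrite err_mul by auto.
  apply Rmult_le_compat_l; [now apply err_nonneg | now apply P_mono].
Qed.

Lemma err_refl A : Alg A -> err A A = 0%R.
Proof.
  intros HA; unfold err; destruct Req_EM_T; [easy |].
  rewrite (P_empty (A := fun w => A w /\ ~ A w)) by firstorder; unfold Rdiv; ring.
Qed.

Lemma err_and A B1 B2 : Alg A -> Alg B1 -> Alg B2 ->
  (err A (fun w => B1 w /\ B2 w) <= err A B1 + err A B2)%R.
Proof.
  intros HA H1 H2; destruct (Req_EM_T (P A) 0) as [HA0 | Hnz].
  { rewrite !err_zero by auto; lra. }
  apply err_le; auto using alg_inter.
  rewrite (P_ext (B := fun w => (A w /\ ~ B1 w) \/ (A w /\ ~ B2 w)))
    by (intros w; destruct (classic (B1 w)); tauto).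
  eapply Rle_trans; [apply P_subadd; auto using alg_diff |].
  pose proof (@err_mul_le A B1 A HA H1 HA (fun w h => h)).
  pose proof (@err_mul_le A B2 A HA H2 HA (fun w h => h)); lra.
Qed.

Lemma err_or A1 A2 B : Alg A1 -> Alg A2 -> Alg B ->
  (err (fun w => A1 w \/ A2 w) B <= err A1 B + err A2 B)%R.
Proof.
  intros H1 H2 HB; pose proof (err_nonneg H1 HB); pose proof (err_nonneg H2 HB).
  destruct (Req_EM_T (P (fun w => A1 w \/ A2 w)) 0) as [Hnull | Hnz].
  { rewrite err_zero by auto; lra. }
  apply err_le; auto using alg_union.
  rewrite (P_ext (B := fun w => (A1 w /\ ~ B w) \/ (A2 w /\ ~ B w))) by firstorder.
  eapply Rle_trans; [apply P_subadd; auto using alg_diff |].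
  pose proof (@err_mul_le A1 B _ H1 HB (alg_union H1 H2) (fun w h => or_introl h)).
  pose proof (@err_mul_le A2 B _ H2 HB (alg_union H1 H2) (fun w h => or_intror h)); lra.
Qed.

Lemma err_cautious_mono A B C : Alg A -> Alg B -> Alg C -> (err A B <= 1/2)%R ->
  (err (fun w => A w /\ B w) C <= 2 * err A C)%R.
Proof.
  intros HA HB HC Hhalf; pose proof (err_nonneg HA HC).
  destruct (Req_EM_T (P (fun w => A w /\ B w)) 0) as [Hnull | Hnz].
  { rewrite err_zero by auto; lra. }
  apply err_le; auto using alg_inter.
  assert (HAB : (P A <= 2 * P (fun w => A w /\ B w))%R).
  { pose proof (P_split HA HB); pose proof (P_nonneg HA).
    pose proof (@err_mul_le A B A HA HB HA (fun w h => h)).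
    assert (err A B * P A <= 1/2 * P A)%R by (apply Rmult_le_compat_r; lra); lra. }
  pose proof (@err_mul_le A C A HA HC HA (fun w h => h)).
  pose proof (@P_mono (fun w => (A w /\ B w) /\ ~ C w) (fun w => A w /\ ~ C w)
    (alg_diff (alg_inter HA HB) HC) (alg_diff HA HC) ltac:(firstorder)).
  assert (err A C * P A <= err A C * (2 * P (fun w => A w /\ B w)))%R
    by (apply Rmult_le_compat_l; lra).
  lra.
Qed.

Lemma err_weaken A B1 B2 : Alg A -> Alg B1 -> Alg B2 -> (forall w, B1 w -> B2 w) ->
  (err A B2 <= err A B1)%R.
Proof.
  intros HA H1 H2 Hsub; destruct (Req_EM_T (P A) 0) as [HA0 | Hnz].
  { rewrite !err_zero by auto; lra. }
  apply err_le; auto.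
  pose proof (@err_mul_le A B1 A HA H1 HA (fun w h => h)).
  pose proof (@P_mono (fun w => A w /\ ~ B2 w) (fun w => A w /\ ~ B1 w)
    (alg_diff HA H2) (alg_diff HA H1) ltac:(firstorder)); lra.
Qed.
End Probability.

Definition vanishing (f : nat -> R) : Prop :=
  forall eps, (eps > 0)%R -> exists N, forall n, (n >= N)%nat -> (f n < eps)%R.

Lemma vanishing_le (f g : nat -> R) :
  (forall n, 0 <= f n <= g n)%R -> vanishing g -> vanishing f.
Proof.
  intros Hfg Hg eps Heps; destruct (Hg eps Heps) as [N HN].
  exists N; intros n Hn; specialize (HN n Hn); specialize (Hfg n); lra.
Qed.

Lemma vanishing_add (f g : nat -> R) : vanishing f -> vanishing g ->
  vanishing (fun n => f n + g n)%R.
Proof.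
  intros Hf Hg eps Heps.
  destruct (Hf (eps / 2)%R) as [N1 H1], (Hg (eps / 2)%R) as [N2 H2]; try lra.
  exists (max N1 N2); intros n Hn.
  specialize (H1 n ltac:(lia)); specialize (H2 n ltac:(lia)); lra.
Qed.

Section PPD.
Variables (W : Type) (Alg : (W -> Prop) -> Prop) (Pr : nat -> (W -> Prop) -> R).
Hypothesis alg : is_algebra Alg.
Hypothesis prob : forall i, is_prob_on Alg (Pr i).

Let err_seq A B n := err (Pr n) A B.

Lemma err_seq_nonneg A B n : Alg A -> Alg B -> (0 <= err_seq A B n)%R.
Proof. apply err_nonneg; auto. Qed.

Lemma ppd_cond_err A B : Alg A -> Alg B -> ppd_cond Pr A B <-> vanishing (err_seq A B).
Proof.
  intros HA HB; unfold ppd_cond, Un_cv, vanishing, R_dist.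
  assert (E : forall n, Rabs (cprob (Pr n) B A - 1) = err_seq A B n).
  { intros n; rewrite (cprob_err alg (prob n) A B HA HB).
    replace (1 - err (Pr n) A B - 1)%R with (- err (Pr n) A B)%R by ring.
    rewrite Rabs_Ropp; apply Rabs_right, Rle_ge, err_seq_nonneg; auto. }
  now setoid_rewrite E.
Qed.

Lemma ppd_cond_laws : conditional_laws Alg (ppd_cond Pr).
Proof.
  split.
  - intros A B HA HB Hempty; apply ppd_cond_err; auto.
    intros eps Heps; exists 0%nat; intros n _; unfold err_seq.
    rewrite err_zero; auto; now apply (P_empty alg (prob n)).
  - intros A HA; apply ppd_cond_err; auto.
    intros eps Heps; exists 0%nat; intros n _; unfold err_seq.
    rewrite (err_refl alg (prob n) A HA); auto.
  - intros A B1 B2 HA H1 H2; rewrite !ppd_cond_err by (try apply alg_inter; auto).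
    intros V1 V2; apply vanishing_le with (g := (fun n => err_seq A B1 n + err_seq A B2 n)%R).
    + intros n; split; [apply err_seq_nonneg; try apply alg_inter; auto |].
      apply (err_and alg (prob n)); auto.
    + now apply vanishing_add.
  - intros A1 A2 B H1 H2 HB; rewrite !ppd_cond_err by (try apply alg_union; auto).
    intros V1 V2; apply vanishing_le with (g := (fun n => err_seq A1 B n + err_seq A2 B n)%R).
    + intros n; split; [apply err_seq_nonneg; try apply alg_union; auto |].
      apply (err_or alg (prob n)); auto.
    + now apply vanishing_add.
  - intros A B C HA HB HC; rewrite !ppd_cond_err by (try apply alg_inter; auto).
    intros VB VC; destruct (VB (1/2)%R ltac:(lra)) as [N HN].
    intros eps Heps; destruct (VC (eps/2)%R ltac:(lra)) as [N' HN'].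
    exists (max N N'); intros n Hn.
    pose proof (err_cautious_mono alg (prob n) A B C HA HB HC
      ltac:(specialize (HN n ltac:(lia)); unfold err_seq in HN; lra)).
    specialize (HN' n ltac:(lia)); unfold err_seq in *; lra.
  - intros A B1 B2 HA H1 H2 Hsub; rewrite !ppd_cond_err by auto.
    apply vanishing_le; intros n; split; [apply err_seq_nonneg; auto |].
    apply (err_weaken alg (prob n)); auto.
Qed.
End PPD.

Lemma poss_cond_laws (W : Type) (Poss : (W -> Prop) -> R) :
  is_poss Poss -> conditional_laws (fun _ => True) (poss_cond Poss).
Proof.
  intros (Hrange & _ & Hempty & Hlub).
  assert (Hnonneg : forall A, (0 <= Poss A)%R) by apply Hrange.
  apply rank_cond_laws; auto.
  now apply lub_rank_or.
Qed.

Lemma kappa_cond_laws (W : Type) (k : (W -> Prop) -> option nat) :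
  is_kappa k -> conditional_laws (fun _ => True) (kappa_cond k).
Proof.
  intros Hk; rewrite kappa_cond_rank.
  assert (Hempty : forall A, isempty A -> kappa_rank (k A) = 0%R)
    by (intros A HA; destruct Hk as (_ & Hinf & _); now rewrite Hinf).
  apply rank_cond_laws; auto using kappa_rank_nonneg.
  apply (lub_rank_or (fun A => kappa_rank (k A))); auto using kappa_rank_nonneg.
  now apply kappa_rank_lub.
Qed.

Theorem theorem5p1 (S : vocab) (a : form S) :
  provable a ->
  valid_wf_pref a /\ valid_pref a /\ valid_kappa a /\ valid_poss a /\ valid_ppd a.
Proof.
  intros Hp; repeat split.
  - intros D W pi prec _ Hspo _.
    apply provable_sound with (Good := fun _ => True); auto using pref_cond_laws.
  - intros D W pi prec _ Hspo.
    apply provable_sound with (Good := fun _ => True); auto using pref_cond_laws.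
  - intros D W pi k _ Hk.
    apply provable_sound with (Good := fun _ => True); auto using kappa_cond_laws.
  - intros D W pi Poss _ HPoss.
    apply provable_sound with (Good := fun _ => True); auto using poss_cond_laws.
  - intros D W pi Alg Pr _ Halg Hprob Hdef.
    apply provable_sound with (Good := Alg); auto using ppd_cond_laws.
Qed.
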